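(* Let $B\in\mathbb{C}^{n\times k}$ with $k\le n$ and $\operatorname{rank}(B)=k$, and let $P_*=B(B^{\mathrm{H}}B)^{-1/2}$ be the unique orthonormal polar factor of $B$. Given $P\in\mathbb{C}^{n\times k}$ with $P^{\mathrm{H}}P=I_k$, let $$\eta=\|B\|_{\mathrm{tr}}-\|P^{\mathrm{H}}B\|_{\mathrm{tr}},\qquad \epsilon=\sqrt{\frac{2\eta}{\sigma_{\min}(B)}}.$$ Then $$\frac{\|B-P(P^{\mathrm{H}}B)\|_{\mathrm{F}}}{\|B\|_2}\le\|\sin\Theta({\cal R}(P),{\cal R}(P_* ))\|_{\mathrm{F}}\le\epsilon,$$ and if moreover $\operatorname{rank}(P^{\mathrm{H}}B)=k$, then $$\|PQ-P_*\|_{\mathrm{F}}\le\left(1+\frac{2\|B\|_2}{\sigma_{\min}(B)+\sigma_{\min}(P^{\mathrm{H}}B)}\right)\epsilon,$$ where $Q\in\mathbb{C}^{k\times k}$ is the (unitary) orthonormal polar factor of $P^{\mathrm{H}}B$.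
   Context: For a matrix $X$, $X^{\mathrm{H}}$ is its conjugate transpose, ${\cal R}(X)$ its column space, $\|X\|_2$ its largest singular value, $\|X\|_{\mathrm{F}}=\sqrt{\operatorname{tr}(X^{\mathrm{H}}X)}$ its Frobenius norm. For $C\in\mathbb{C}^{m\times k}$ with singular values $\sigma_1(C)\ge\cdots\ge\sigma_k(C)$, $\sigma_{\min}(C)=\sigma_k(C)$ and $\|C\|_{\mathrm{tr}}=\sum_{i=1}^k\sigma_i(C)$ (trace/nuclear norm). A polar decomposition of $C\in\mathbb{C}^{m\times k}$ ($k\le m$) is $C=Q\Lambda$ with $Q^{\mathrm{H}}Q=I_k$ and $\Lambda\succeq0$; $Q$ is an orthonormal polar factor, unique when $\operatorname{rank}(C)=k$. For two $k$-dimensional subspaces ${\cal X}={\cal R}(X)$, ${\cal Y}={\cal R}(Y)$ of $\mathbb{C}^n$ with $X,Y$ having orthonormal columns, the canonical angles are $\theta_i=\arccos\sigma_i(X^{\mathrm{H}}Y)\in[0,\pi/2]$, $i=1,\dots,k$; $\Theta({\cal X},{\cal Y})=\operatorname{diag}(\theta_1,\dots,\theta_k)$ and $\|\sin\Theta({\cal X},{\cal Y})\|_{\mathrm{F}}=\big(\sum_{i=1}^k\sin^2\theta_i\big)^{1/2}$. *)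

From mathcomp Require Import all_boot all_order all_algebra.
From mathcomp Require Import complex.
From mathcomp Require Import reals trigo.
Set Implicit Arguments. Unset Strict Implicit. Unset Printing Implicit Defensive.
Import Order.TTheory GRing.Theory Num.Theory.
Local Open Scope ring_scope.
Local Open Scope sesquilinear_scope.

Section Defs.
Variable R : realType.
Local Notation C := R[i].

(* Conjugate transpose X^H is written  X ^t*  (spectral.v, sesquilinear_scope). *)

(* Singular values of X in C^{m x k}: sigma_i(X) = sqrt(lambda_i(X^H X)), where
   lambda_i are the eigenvalues of the Hermitian PSD matrix X^H X given by the
   spectral decomposition of spectral.v (they are real and nonnegative, so
   taking the real part is exact).  The order of the indices is the (unsorted)
   order returned by spectral_diag; all quantities below are order-independent. *)
Definition sv m k (X : 'M[C]_(m, k)) (i : 'I_k) : R :=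
  Num.sqrt (complex.Re (spectral_diag (X ^t* *m X) 0 i)).

Definition norm2 m k (X : 'M[C]_(m, k)) : R := \big[Num.max/0]_(i < k) sv X i.

Definition smin m k (X : 'M[C]_(m, k)) : R :=
  \big[Num.min/norm2 X]_(i < k) sv X i.

Definition trnorm m k (X : 'M[C]_(m, k)) : R := \sum_(i < k) sv X i.

Definition frob m k (X : 'M[C]_(m, k)) : R :=
  Num.sqrt (complex.Re (\tr (X ^t* *m X))).

Definition psdmx k (L : 'M[C]_k) : Prop :=
  L ^t* = L /\ forall v : 'cV[C]_k, 0 <= (v ^t* *m L *m v) 0 0.

Definition polar_factor m k (Q X : 'M[C]_(m, k)) : Prop :=
  Q ^t* *m Q = 1%:M /\ exists L : 'M[C]_k, psdmx L /\ X = Q *m L.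

(* ||sin Theta(R(X), R(Y))||_F for X, Y with orthonormal columns (orthonormal
   bases of the two subspaces): theta_i = arccos sigma_i(X^H Y). *)
Definition sinThetaF n k (X Y : 'M[C]_(n, k)) : R :=
  Num.sqrt (\sum_(i < k) (sin (acos (sv (X ^t* *m Y) i))) ^+ 2).

End Defs.

(* Write B = P_* L with L = (B^H B)^(1/2) PSD, and let G = C^H C for the cosine
   matrix C = P^H P_*.  Then I - G = P_*^H (I - P P^H) P_* is PSD and
   tr (I - G) = ||sin Theta||_F^2.
   - B - P P^H B = (I - P P^H) P_* L, so its squared Frobenius norm is
     tr ((I - G) L^2) <= ||B||_2^2 tr (I - G).
   - L >= sigma_min(B) gives sigma_min(B) tr (I - G) <= tr L - tr (G L).  The
     trace inequality 2 tr A <= tr L + tr (L^-1 A^2), applied to the PSD square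
     root A of (P^H B)^H (P^H B) = L G L, gives 2 ||P^H B||_tr <= tr L + tr (G L);
     since tr L = ||B||_tr, this is sigma_min(B) ||sin Theta||_F^2 <= 2 eta.
   - If P^H B = Q M is a polar decomposition, Z = Q^H C - I solves the Sylvester
     equation Z L + M Z = - L (I - G), and L >= sigma_min(B), M >= sigma_min(P^H B)
     bound ||Z||_F by ||L (I - G)||_F / (sigma_min(B) + sigma_min(P^H B)); finally
     ||P Q - P_*||_F^2 = ||Z||_F^2 + ||sin Theta||_F^2. *)

From mathcomp Require Import all_boot all_order all_algebra.
From mathcomp Require Import complex.
From mathcomp Require Import reals trigo.
From mathcomp Require Import ring lra.
Set Implicit Arguments. Unset Strict Implicit. Unset Printing Implicit Defensive.
Import Order.TTheory GRing.Theory Num.Theory.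
Local Open Scope ring_scope.
Local Open Scope sesquilinear_scope.

Section ConjugateTranspose.
Variable C : numClosedFieldType.

Lemma trmxC_mul m n p (A : 'M[C]_(m, n)) (B : 'M[C]_(n, p)) :
  (A *m B)^t* = B^t* *m A^t*.
Proof. by rewrite trmx_mul map_mxM. Qed.

Lemma trmxC_add m n (A B : 'M[C]_(m, n)) : (A + B)^t* = A^t* + B^t*.
Proof. by rewrite linearD /= map_mxD. Qed.

Lemma trmxC_sub m n (A B : 'M[C]_(m, n)) : (A - B)^t* = A^t* - B^t*.
Proof. by rewrite linearB /= map_mxB. Qed.

Lemma trmxC_opp m n (A : 'M[C]_(m, n)) : (- A)^t* = - A^t*.
Proof. by rewrite linearN /= map_mxN. Qed.

Lemma trmxC_scale m n (c : C) (A : 'M[C]_(m, n)) : (c *: A)^t* = c^* *: A^t*.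
Proof. by rewrite linearZ /= map_mxZ. Qed.

Lemma trmxC1 n : (1%:M : 'M[C]_n)^t* = 1%:M.
Proof. by rewrite tr_scalar_mx map_scalar_mx /= conjC1. Qed.

Lemma trmxC_gram m n (X : 'M[C]_(m, n)) : (X^t* *m X)^t* = X^t* *m X.
Proof. by rewrite trmxC_mul trmxCK. Qed.

Lemma gram_sub m n (A B : 'M[C]_(m, n)) :
  (A - B)^t* *m (A - B) = A^t* *m A - A^t* *m B - B^t* *m A + B^t* *m B.
Proof.
by rewrite trmxC_sub mulmxBl !mulmxBr opprB addrA addrAC.
Qed.

End ConjugateTranspose.

Section PositiveSemidefinite.
Variable C : numClosedFieldType.

Definition qform n (A : 'M[C]_n) (v : 'cV[C]_n) : C := (v^t* *m A *m v) 0 0.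

(* Over [R[i]] this is convertible to [psdmx]. *)
Definition psd n (A : 'M[C]_n) := A^t* = A /\ forall v, 0 <= qform A v.

Lemma qformB n (A M : 'M[C]_n) v : qform (A - M) v = qform A v - qform M v.
Proof. by rewrite /qform mulmxBr mulmxBl [LHS]mxE [X in _ + X]mxE. Qed.

Lemma cV_gram_ge0 m (x : 'cV[C]_m) : 0 <= (x^t* *m x) 0 0.
Proof.
by rewrite !mxE; apply: sumr_ge0 => i _; rewrite !mxE mulrC mul_conjC_ge0.
Qed.

Lemma cV_gram_eq0 m (x : 'cV[C]_m) : (x^t* *m x) 0 0 = 0 -> x = 0.
Proof.
rewrite !mxE => x0; apply/matrixP => i j; rewrite ord1 mxE.
have xi_ge0 (l : 'I_m) : true -> 0 <= (x^t*) 0 l * x l 0.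
  by rewrite !mxE mulrC mul_conjC_ge0.
have /eqP := psumr_eq0P xi_ge0 x0 (i := i) isT.
by rewrite !mxE mulrC mul_conjC_eq0 => /eqP.
Qed.

Lemma psd_gram m n (X : 'M[C]_(m, n)) : psd (X^t* *m X).
Proof.
split=> [|v]; first exact: trmxC_gram.
by rewrite /qform !mulmxA -trmxC_mul -mulmxA cV_gram_ge0.
Qed.

Lemma psd_conj m n (A : 'M[C]_m) (X : 'M[C]_(m, n)) :
  psd A -> psd (X^t* *m A *m X).
Proof.
case=> AH A_ge0; split; first by rewrite !trmxC_mul trmxCK AH mulmxA.
by move=> v; have := A_ge0 (X *m v); rewrite /qform trmxC_mul !mulmxA.
Qed.

Lemma psd_diag n (d : 'rV[C]_n) : (forall i, 0 <= d 0 i) -> psd (diag_mx d).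
Proof.
move=> d_ge0; split.
  apply/matrixP => i j; rewrite !mxE; case: (eqVneq j i) => [->|_].
    by rewrite !mulr1n conj_Creal // ger0_real.
  by rewrite !mulr0n conjC0.
move=> x; rewrite /qform mul_mx_diag !mxE; apply: sumr_ge0 => i _.
by rewrite !mxE mulrAC mulr_ge0 // mulrC mul_conjC_ge0.
Qed.

Lemma psd_invmx n (A : 'M[C]_n) : psd A -> A \in unitmx -> psd (invmx A).
Proof.
case=> AH A_ge0 Au; have AiH : (invmx A)^t* = invmx A.
  by rewrite trmx_inv map_invmx AH.
split=> // v; have := A_ge0 (invmx A *m v).
by rewrite /qform trmxC_mul AiH -!mulmxA (mulmxA A) mulmxV // mul1mx.
Qed.

End PositiveSemidefinite.

Section Spectral.
Variables (C : numClosedFieldType) (n : nat).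
Implicit Types (A K L M N X Z : 'M[C]_n) (c : C).

Lemma spectral_mulmxC A : spectralmx A *m (spectralmx A)^t* = 1%:M.
Proof. exact/unitarymxP/spectral_unitarymx. Qed.

Lemma spectral_mulCmx A : (spectralmx A)^t* *m spectralmx A = 1%:M.
Proof. exact/mulmx1C/spectral_mulmxC. Qed.

Lemma hermitian_spectral A : A^t* = A ->
  A = (spectralmx A)^t* *m diag_mx (spectral_diag A) *m spectralmx A.
Proof.
move=> AH; have /orthomx_spectralP : A \is normalmx by apply/normalmxP; rewrite AH.
by rewrite invmx_unitary // spectral_unitarymx.
Qed.

Lemma psd_spectral A (e : 'rV[C]_n) : (forall i, 0 <= e 0 i) ->
  psd ((spectralmx A)^t* *m diag_mx e *m spectralmx A).
Proof. by move=> e_ge0; apply/psd_conj/psd_diag. Qed.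

Definition eigvec A i : 'cV[C]_n := (spectralmx A)^t* *m delta_mx i 0.

Lemma qform_eigvec A M i :
  qform M (eigvec A i) = (spectralmx A *m M *m (spectralmx A)^t*) i i.
Proof.
rewrite /qform /eigvec trmxC_mul trmxCK /= trmx_delta.
rewrite (map_delta_mx (Num.conj : {rmorphism C -> C})).
by rewrite !mulmxA -rowE -colE -!mulmxA -row_mul !mxE.
Qed.

Lemma spectral_diagonalize A : A^t* = A ->
  spectralmx A *m A *m (spectralmx A)^t* = diag_mx (spectral_diag A).
Proof.
move=> AH; rewrite [X in _ *m X *m _](hermitian_spectral AH) !mulmxA.
by rewrite spectral_mulmxC mul1mx -mulmxA spectral_mulmxC mulmx1.
Qed.

Lemma spectral_diagE A i : A^t* = A -> spectral_diag A 0 i = qform A (eigvec A i).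
Proof. by move=> AH; rewrite qform_eigvec spectral_diagonalize // mxE eqxx. Qed.

Lemma qform_scalar_eigvec A c i : qform c%:M (eigvec A i) = c.
Proof.
rewrite qform_eigvec mul_mx_scalar -scalemxAl spectral_mulmxC.
by rewrite scalemx1 mxE eqxx.
Qed.

Lemma psd_spectral_diag_ge0 A i : psd A -> 0 <= spectral_diag A 0 i.
Proof. by case=> AH A_ge0; rewrite spectral_diagE. Qed.

Lemma mxtrace_spectral A : A^t* = A -> \tr A = \sum_i spectral_diag A 0 i.
Proof.
move=> AH; rewrite {1}(hermitian_spectral AH) mxtrace_mulC mulmxA.
by rewrite spectral_mulmxC mul1mx mxtrace_diag.
Qed.

Lemma mxtrace_psd_ge0 A : psd A -> 0 <= \tr A.
Proof.
move=> Apsd; rewrite mxtrace_spectral; last by case: Apsd.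
by apply: sumr_ge0 => i _; apply: psd_spectral_diag_ge0.
Qed.

Lemma mxtrace_psd_mul_ge0 N X : psd N -> psd X -> 0 <= \tr (N *m X).
Proof.
move=> Npsd [_ X_ge0]; have NH : N^t* = N by case: Npsd.
rewrite {1}(hermitian_spectral NH) -!mulmxA mxtrace_mulC -!mulmxA.
rewrite /mxtrace; apply: sumr_ge0 => i _; rewrite mul_diag_mx mxE.
by rewrite mulr_ge0 ?psd_spectral_diag_ge0 // !mulmxA -qform_eigvec.
Qed.

Lemma mxtrace_mul_psd_le K A c : psd K -> psd (c%:M - A) ->
  \tr (K *m A) <= c * \tr K.
Proof.
move=> Kpsd cA_psd; have := mxtrace_psd_mul_ge0 Kpsd cA_psd.
by rewrite mulmxBr linearB /= mul_mx_scalar linearZ /= subr_ge0.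
Qed.

Lemma spectral_sub_scalar A c : A^t* = A ->
  A - c%:M = (spectralmx A)^t* *m diag_mx (spectral_diag A - const_mx c)
               *m spectralmx A.
Proof.
move=> AH; rewrite linearB /= diag_const_mx mulmxBr mulmxBl -hermitian_spectral //.
by rewrite mul_mx_scalar -scalemxAl spectral_mulCmx scalemx1.
Qed.

Lemma psd_sub_scalar A c : A^t* = A -> (forall i, c <= spectral_diag A 0 i) ->
  psd (A - c%:M).
Proof.
by move=> AH c_le; rewrite spectral_sub_scalar //; apply: psd_spectral => i;
  rewrite !mxE subr_ge0.
Qed.

Lemma psd_scalar_sub A c : A^t* = A -> (forall i, spectral_diag A 0 i <= c) ->
  psd (c%:M - A).
Proof.
move=> AH le_c; rewrite -opprB spectral_sub_scalar // -mulNmx -mulmxN -linearN /=.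
by apply: psd_spectral => i; rewrite !mxE opprB subr_ge0.
Qed.

Lemma spectral_diag_le A c i : A^t* = A -> psd (c%:M - A) ->
  spectral_diag A 0 i <= c.
Proof.
move=> AH [_ cA_ge0]; have := cA_ge0 (eigvec A i).
by rewrite qformB qform_scalar_eigvec -spectral_diagE // subr_ge0.
Qed.

Lemma psd_sqrt_sub_scalar L c : psd L -> 0 <= c ->
  psd (L *m L - (c ^+ 2)%:M) -> psd (L - c%:M).
Proof.
move=> Lpsd c_ge0 [_ LLc_ge0]; have LH : L^t* = L by case: Lpsd.
apply: psd_sub_scalar => // i; have := LLc_ge0 (eigvec L i).
set V := spectralmx L; set d := spectral_diag L.
have VLLV : V *m (L *m L) *m V^t* = (V *m L *m V^t*) *m (V *m L *m V^t*).
  by rewrite !mulmxA -(mulmxA _ (V^t*) V) spectral_mulCmx mulmx1.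
rewrite qformB qform_scalar_eigvec qform_eigvec VLLV spectral_diagonalize //.
rewrite mulmx_diag !mxE eqxx -expr2 subr_ge0.
by rewrite ler_sqr // ?nnegrE // psd_spectral_diag_ge0.
Qed.

Lemma mxtrace_amgm L A : psd L -> L \in unitmx -> A^t* = A ->
  2 * \tr A <= \tr L + \tr (invmx L *m (A *m A)).
Proof.
move=> Lpsd Lu AH; have LH : L^t* = L by case: Lpsd.
have := mxtrace_psd_ge0 (psd_conj (A - L) (psd_invmx Lpsd Lu)).
have -> : (A - L)^t* *m invmx L *m (A - L) = A *m invmx L *m A - A - A + L.
  rewrite trmxC_sub AH LH -mulmxA mulmxBl mulKVmx // mulmxBr mulVmx //.
  by rewrite mulmxBr mulmx1 mulmxA opprB addrA addrAC.
rewrite !linearD !linearN /= -mulmxA mxtrace_mulC -mulmxA.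
set t := \tr A; set l := \tr L; set q := \tr _ => ge0.
by rewrite -subr_ge0 (_ : l + q - 2 * t = q - t - t + l) //; ring.
Qed.

Lemma mxtrace_sqrt_le L A : psd L -> L \in unitmx -> A^t* = A ->
  A *m A = L *m L -> \tr A <= \tr L.
Proof.
move=> Lpsd Lu AH AA; have := mxtrace_amgm Lpsd Lu AH.
by rewrite AA mulmxA mulVmx // mul1mx mulr_natl -mulr2n ler_pMn2r.
Qed.

(* With L = X + a and M = Y + b, the cross term in the expansion of
   ||Z X + Y Z + (a + b) Z||^2 is 2 (a + b) (tr (Z^H Z X) + tr (Z^H Y Z)) >= 0. *)
Lemma sylvester_gram_lb L M Z (a b : C) : 0 <= a -> 0 <= b ->
  psd (L - a%:M) -> psd (M - b%:M) ->
  (a + b) ^+ 2 * \tr (Z^t* *m Z) <=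
  \tr ((Z *m L + M *m Z)^t* *m (Z *m L + M *m Z)).
Proof.
move=> a_ge0 b_ge0; move: (L - a%:M) (M - b%:M) (subrK a%:M L) (subrK b%:M M).
move=> X Y <- <- Xpsd Ypsd; have [XH YH] : X^t* = X /\ Y^t* = Y.
  by case: Xpsd; case: Ypsd.
set c := a + b; have c_ge0 : 0 <= c by rewrite addr_ge0.
have cR : c^* = c by rewrite conj_Creal // ger0_real.
set F := Z *m X + Y *m Z.
have -> : Z *m (X + a%:M) + (Y + b%:M) *m Z = F + c *: Z.
  by rewrite mulmxDr mulmxDl mul_mx_scalar mul_scalar_mx scalerDl addrACA.
set u := \tr (Z^t* *m Z *m X); set w := \tr (Z^t* *m Y *m Z).
have u_ge0 : 0 <= u by apply: mxtrace_psd_mul_ge0 => //; apply: psd_gram.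
have w_ge0 : 0 <= w by apply/mxtrace_psd_ge0/psd_conj.
have FZ : \tr (F^t* *m Z) = u + w.
  rewrite trmxC_add !trmxC_mul XH YH mulmxDl mxtraceD -mulmxA mxtrace_mulC.
  by rewrite -mulmxA [in X in _ + X = _]mulmxA.
have ZF : \tr (Z^t* *m F) = u + w by rewrite mulmxDr mxtraceD !mulmxA.
have FF_ge0 := mxtrace_psd_ge0 (psd_gram F); clearbody F.
rewrite trmxC_add trmxC_scale cR mulmxDl !mulmxDr -!scalemxAl -!scalemxAr.
rewrite !mxtraceD !mxtraceZ FZ ZF -subr_ge0.
rewrite (_ : _ - _ = \tr (F^t* *m F) + (2 * c) * (u + w)); last by ring.
by rewrite addr_ge0 // !mulr_ge0 // addr_ge0.
Qed.

End Spectral.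

Section SingularValues.
Variable R : realType.
Local Notation C := R[i].
Local Open Scope complex_scope.
Variables m k : nat.
Implicit Types (X : 'M[C]_(m, k)) (L : 'M[C]_k).

Lemma sv_ge0 X i : 0 <= sv X i.
Proof. exact: sqrtr_ge0. Qed.

Lemma sv_sqr X i : (sv X i ^+ 2)%:C = spectral_diag (X^t* *m X) 0 i.
Proof.
have d_ge0 := psd_spectral_diag_ge0 i (psd_gram X).
rewrite /sv sqr_sqrtr ?RRe_real ?ger0_real //.
by move: d_ge0; rewrite lecE => /andP[].
Qed.

Lemma norm2_ge0 X : 0 <= norm2 X.
Proof.
apply: (big_ind (fun x => 0 <= x)) => // [x y x_ge0 y_ge0|i _].
  by rewrite le_max x_ge0.
exact: sv_ge0.
Qed.

Lemma sv_le_norm2 X i : sv X i <= norm2 X.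
Proof. exact: le_bigmax. Qed.

Lemma smin_le_sv X i : smin X <= sv X i.
Proof. exact: bigmin_le. Qed.

Lemma smin_ge0 X : 0 <= smin X.
Proof.
apply: (big_ind (fun x => 0 <= x)) => [|x y x_ge0 y_ge0|i _].
- exact: norm2_ge0.
- by rewrite le_min x_ge0.
- exact: sv_ge0.
Qed.

Lemma frob_ge0 X : 0 <= frob X.
Proof. exact: sqrtr_ge0. Qed.

Lemma frob_sqr X : (frob X ^+ 2)%:C = \tr (X^t* *m X).
Proof.
have tr_ge0 := mxtrace_psd_ge0 (psd_gram X).
rewrite /frob sqr_sqrtr ?RRe_real ?ger0_real //.
by move: tr_ge0; rewrite lecE => /andP[].
Qed.

Lemma psd_norm2_sub_gram X : psd ((norm2 X ^+ 2)%:C%:M - X^t* *m X).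
Proof.
apply: psd_scalar_sub => [|i]; first exact: trmxC_gram.
by rewrite -sv_sqr lecR ler_sqr ?nnegrE ?sv_ge0 ?norm2_ge0 ?sv_le_norm2.
Qed.

Lemma psd_sub_smin X L : psd L -> X^t* *m X = L *m L -> psd (L - (smin X)%:C%:M).
Proof.
move=> Lpsd XX; apply: (psd_sqrt_sub_scalar Lpsd); first by rewrite ler0c smin_ge0.
rewrite -XX; apply: psd_sub_scalar => [|i]; first exact: trmxC_gram.
by rewrite -sv_sqr -rmorphXn lecR ler_sqr ?nnegrE ?sv_ge0 ?smin_ge0 ?smin_le_sv.
Qed.

Lemma sv_gt0 X i : \rank X = k -> 0 < sv X i.
Proof.
move=> rkX; set w := eigvec (X^t* *m X) i.
have d_neq0 : spectral_diag (X^t* *m X) 0 i != 0.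
  apply/eqP => d0.
  have Xw0 : X *m w = 0.
    apply: cV_gram_eq0; rewrite trmxC_mul -mulmxA mulmxA.
    by rewrite -d0 spectral_diagE ?trmxC_gram // /qform !mulmxA.
  have w0 : w = 0.
    apply/trmx_inj/eqP; rewrite trmx0 -(mulmx_free_eq0 _ (_ : row_free X^T)).
      by rewrite -trmx_mul Xw0 trmx0.
    by rewrite /row_free mxrank_tr rkX.
  have /eqP := qform_scalar_eigvec (X^t* *m X) 1 i.
  by rewrite -/w w0 /qform mulmx0 mxE eq_sym oner_eq0.
have := psd_spectral_diag_ge0 i (psd_gram X).
rewrite le_eqVlt eq_sym (negPf d_neq0) /= ltcE => /andP[_ Re_gt0].
by rewrite sqrtr_gt0.
Qed.

Lemma smin_gt0 X : (0 < k)%N -> \rank X = k -> 0 < smin X.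
Proof.
move=> k_gt0 rkX; apply: (big_ind (fun x => 0 < x)) => [|x y x_gt0 y_gt0|i _].
- exact: lt_le_trans (sv_gt0 (Ordinal k_gt0) rkX) (sv_le_norm2 _ _).
- by rewrite lt_min x_gt0.
- exact: sv_gt0.
Qed.

Definition gram_sqrt X : 'M[C]_k :=
  let V := spectralmx (X^t* *m X) in V^t* *m diag_mx (\row_i (sv X i)%:C) *m V.

Lemma psd_gram_sqrt X : psd (gram_sqrt X).
Proof. by apply: psd_spectral => i; rewrite mxE ler0c sv_ge0. Qed.

Lemma gram_sqrtK X : gram_sqrt X *m gram_sqrt X = X^t* *m X.
Proof.
set V := spectralmx (X^t* *m X); set S := diag_mx (\row_i (sv X i)%:C).
have SS : S *m S = diag_mx (spectral_diag (X^t* *m X)).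
  rewrite mulmx_diag; congr diag_mx; apply/rowP => i.
  by rewrite !mxE -sv_sqr rmorphXn expr2.
rewrite [RHS]hermitian_spectral ?trmxC_gram // -/V -SS /gram_sqrt -/V -/S.
by rewrite !mulmxA -(mulmxA _ V (V^t*)) spectral_mulmxC mulmx1.
Qed.

Lemma mxtrace_gram_sqrt X : \tr (gram_sqrt X) = (trnorm X)%:C.
Proof.
rewrite /gram_sqrt mxtrace_mulC mulmxA spectral_mulmxC mul1mx mxtrace_diag.
by rewrite rmorph_sum; apply: eq_bigr => i _; rewrite mxE.
Qed.

Lemma trnorm_sqrt X L : psd L -> L \in unitmx -> X^t* *m X = L *m L ->
  (trnorm X)%:C = \tr L.
Proof.
move=> Lpsd Lu XX; have [SH _] := psd_gram_sqrt X; have [LH _] := Lpsd.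
have SS : gram_sqrt X *m gram_sqrt X = L *m L by rewrite gram_sqrtK.
have Su : gram_sqrt X \in unitmx.
  have : L *m L \in unitmx by rewrite unitmx_mul Lu.
  by rewrite -SS unitmx_mul => /andP[].
rewrite -mxtrace_gram_sqrt; apply/le_anti/andP; split.
  exact: mxtrace_sqrt_le.
exact: mxtrace_sqrt_le (psd_gram_sqrt X) Su LH (esym SS).
Qed.

Lemma frobN X : frob (- X) = frob X.
Proof. by rewrite /frob trmxC_opp mulNmx mulmxN opprK. Qed.

End SingularValues.

Section Sylvester.
Variables (R : realType) (k : nat).
Local Open Scope complex_scope.

Lemma sylvester_frob_lb (L M Z : 'M[R[i]]_k) (a b : R) :
  0 <= a -> 0 <= b -> psd (L - a%:C%:M) -> psd (M - b%:C%:M) ->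
  (a + b) * frob Z <= frob (Z *m L + M *m Z).
Proof.
move=> a_ge0 b_ge0 La Mb; have ab_ge0 : 0 <= a + b by rewrite addr_ge0.
rewrite -(ler_pXn2r (_ : 0 < 2)%N) ?nnegrE ?mulr_ge0 ?frob_ge0 // exprMn.
rewrite -lecR rmorphM /= !frob_sqr rmorphXn rmorphD /=.
by apply: (sylvester_gram_lb Z _ _ La Mb); rewrite ler0c.
Qed.

End Sylvester.

Section PrincipalAngles.
Variables (R : realType) (n k : nat) (P Pstar : 'M[R[i]]_(n, k)).
Hypotheses (PU : P^t* *m P = 1%:M) (PstarU : Pstar^t* *m Pstar = 1%:M).
Local Open Scope complex_scope.

Let G := (P^t* *m Pstar)^t* *m (P^t* *m Pstar).

Lemma gram_proj_compl :
  (1%:M - P *m P^t*)^t* *m (1%:M - P *m P^t*) = 1%:M - P *m P^t*.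
Proof.
rewrite trmxC_sub trmxC1 trmxC_mul trmxCK mulmxBl mul1mx mulmxBr mulmx1.
by rewrite -mulmxA (mulmxA (P^t*)) PU mul1mx subrr subr0.
Qed.

Lemma compl_cos_gram : 1%:M - G = Pstar^t* *m (1%:M - P *m P^t*) *m Pstar.
Proof. by rewrite mulmxBr mulmx1 mulmxBl PstarU /G trmxC_mul trmxCK !mulmxA. Qed.

Lemma psd_1_sub_cos : psd (1%:M - G).
Proof. by rewrite compl_cos_gram -gram_proj_compl; apply/psd_conj/psd_gram. Qed.

Lemma sinThetaF_sqr : (sinThetaF P Pstar ^+ 2)%:C = \tr (1%:M - G).
Proof.
have sv_le1 i : sv (P^t* *m Pstar) i <= 1.
  rewrite -(expr_le1 (_ : 0 < 2)%N) ?sv_ge0 // -lecR rmorph1 sv_sqr.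
  exact: spectral_diag_le (trmxC_gram _) psd_1_sub_cos.
have sin2E i : sin (acos (sv (P^t* *m Pstar) i)) ^+ 2 = 1 - sv (P^t* *m Pstar) i ^+ 2.
  rewrite sin_acos ?sv_le1 ?(le_trans _ (sv_ge0 _ _)) ?lerN10 // sqr_sqrtr //.
  by rewrite subr_ge0 exprn_ile1 ?sv_ge0.
rewrite /sinThetaF sqr_sqrtr; last by apply: sumr_ge0 => i _; apply: sqr_ge0.
rewrite linearB /= (mxtrace_spectral (trmxC_gram _)) rmorph_sum.
have -> : \tr (1%:M : 'M[R[i]]_k) = \sum_(i < k) 1.
  by apply: eq_bigr => i _; rewrite mxE eqxx.
by rewrite -sumrB; apply: eq_bigr => i _; rewrite sin2E rmorphB rmorph1 -sv_sqr.
Qed.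

Lemma gram_rotate_cos (Q : 'M[R[i]]_k) : Q^t* *m Q = 1%:M ->
  (Q^t* *m (P^t* *m Pstar))^t* *m (Q^t* *m (P^t* *m Pstar)) = G.
Proof.
by move=> QU; rewrite trmxC_mul trmxCK -mulmxA (mulmxA Q) (mulmx1C QU) mul1mx.
Qed.

Lemma frob_rotation_sqr (Q : 'M[R[i]]_k) : Q^t* *m Q = 1%:M ->
  frob (P *m Q - Pstar) ^+ 2 =
  frob (Q^t* *m (P^t* *m Pstar) - 1%:M) ^+ 2 + sinThetaF P Pstar ^+ 2.
Proof.
move=> QU; apply: complexI; rewrite rmorphD /= !frob_sqr sinThetaF_sqr.
set D := Q^t* *m (P^t* *m Pstar).
have PQ_U : (P *m Q)^t* *m (P *m Q) = 1%:M.
  by rewrite trmxC_mul -mulmxA (mulmxA (P^t*)) PU mul1mx.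
have PQ_D : (P *m Q)^t* *m Pstar = D by rewrite trmxC_mul -mulmxA.
have DH : Pstar^t* *m (P *m Q) = D^t* by rewrite -PQ_D trmxC_mul trmxCK.
rewrite !gram_sub PQ_U PQ_D DH PstarU gram_rotate_cos // trmxC1 mul1mx !mulmx1.
by rewrite !linearD !linearN /=; ring.
Qed.

End PrincipalAngles.

Section PolarFactor.
Variables (R : realType) (n k : nat) (B Pstar P : 'M[R[i]]_(n, k)) (L : 'M[R[i]]_k).
Hypotheses (PU : P^t* *m P = 1%:M) (PstarU : Pstar^t* *m Pstar = 1%:M).
Hypotheses (Lpsd : psd L) (BE : B = Pstar *m L).
Local Open Scope complex_scope.

Let C0 := P^t* *m Pstar.
Let G := C0^t* *m C0.

Lemma gram_polar : B^t* *m B = L *m L.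
Proof.
have [LH _] := Lpsd.
by rewrite BE trmxC_mul LH -mulmxA (mulmxA (Pstar^t*)) PstarU mul1mx.
Qed.

Lemma residual_gram : (B - P *m (P^t* *m B))^t* *m (B - P *m (P^t* *m B)) =
  L *m (1%:M - G) *m L.
Proof.
have [LH _] := Lpsd.
have -> : B - P *m (P^t* *m B) = (1%:M - P *m P^t*) *m Pstar *m L.
  by rewrite -mulmxA -BE mulmxBl mul1mx mulmxA.
rewrite !trmxC_mul LH -!mulmxA (mulmxA (_^t*) (1%:M - _)) (gram_proj_compl PU).
by rewrite (compl_cos_gram P PstarU) !mulmxA.
Qed.

Lemma residual_frob_le :
  frob (B - P *m (P^t* *m B)) <= norm2 B * sinThetaF P Pstar.
Proof.
rewrite -(ler_pXn2r (_ : 0 < 2)%N) ?nnegrE ?frob_ge0 ?mulr_ge0 ?norm2_ge0 ?sqrtr_ge0 //.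
rewrite -lecR frob_sqr residual_gram exprMn rmorphM /= (sinThetaF_sqr PU PstarU).
rewrite -mulmxA mxtrace_mulC -mulmxA -gram_polar.
exact: mxtrace_mul_psd_le (psd_1_sub_cos PU PstarU) (psd_norm2_sub_gram B).
Qed.

Lemma residual_ratio_le :
  frob (B - P *m (P^t* *m B)) / norm2 B <= sinThetaF P Pstar.
Proof.
have [->|nu_neq0] := eqVneq (norm2 B) 0; first by rewrite invr0 mulr0 sqrtr_ge0.
have nu_gt0 : 0 < norm2 B by rewrite lt_def nu_neq0 norm2_ge0.
by rewrite ler_pdivrMr // mulrC residual_frob_le.
Qed.

Lemma unitmx_polar : \rank B = k -> L \in unitmx.
Proof.
move=> rkB; rewrite -row_free_unit /row_free eqn_leq rank_leq_row /= -{1}rkB BE.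
exact: mxrankM_maxr.
Qed.

Lemma smin_sin_le_trnorm_gap : \rank B = k ->
  smin B * sinThetaF P Pstar ^+ 2 <= 2 * (trnorm B - trnorm (P^t* *m B)).
Proof.
move=> rkB; have Lu := unitmx_polar rkB; set X := P^t* *m B.
have XX : X^t* *m X = L *m G *m L.
  have -> : X = C0 *m L by rewrite /X BE mulmxA.
  by rewrite trmxC_mul (proj1 Lpsd) !mulmxA.
have [SH _] := psd_gram_sqrt X.
have amgm := mxtrace_amgm Lpsd Lu SH.
rewrite gram_sqrtK XX -(mulmxA L) mulKmx // mxtrace_gram_sqrt in amgm.
have := mxtrace_psd_mul_ge0 (psd_1_sub_cos PU PstarU) (psd_sub_smin Lpsd gram_polar).
rewrite mulmxBr mul_mx_scalar linearB linearZ /= -/C0 -/G -(sinThetaF_sqr PU PstarU).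
rewrite mulmxBl mul1mx linearB /= subr_ge0 -rmorphM /= => lower.
have := lerD lower amgm; rewrite -(trnorm_sqrt Lpsd Lu gram_polar) addrACA addNr addr0.
rewrite -[2]/(2%:R) -(rmorph_nat (real_complex R)) -!rmorphM -!rmorphD /= lecR.
lra.
Qed.

Lemma frob_mul_compl_cos_le :
  frob (L *m (1%:M - G)) <= norm2 B * sinThetaF P Pstar.
Proof.
have Npsd := psd_1_sub_cos PU PstarU; have [NH _] := Npsd; have [LH _] := Lpsd.
rewrite -(ler_pXn2r (_ : 0 < 2)%N) ?nnegrE ?mulr_ge0 ?frob_ge0 ?norm2_ge0 ?sqrtr_ge0 //.
rewrite -lecR frob_sqr exprMn rmorphM /= (sinThetaF_sqr PU PstarU) -/C0 -/G.
rewrite trmxC_mul NH LH -/C0 -/G mulmxA mxtrace_mulC -(mulmxA _ L L) -gram_polar mulmxA.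
apply: le_trans (mxtrace_mul_psd_le _ (psd_norm2_sub_gram B)) _.
  by have := psd_gram (1%:M - G); rewrite NH.
apply: ler_wpM2l; first by rewrite ler0c sqr_ge0.
rewrite -subr_ge0 mulmxBr mulmx1 [in X in _ - X]linearB /= opprB addrC subrK.
exact: mxtrace_psd_mul_ge0 Npsd (psd_gram C0).
Qed.

Lemma polar_rotation_le (Q M : 'M[R[i]]_k) :
  Q^t* *m Q = 1%:M -> psd M -> P^t* *m B = Q *m M ->
  (smin B + smin (P^t* *m B)) * frob (Q^t* *m C0 - 1%:M) <=
  norm2 B * sinThetaF P Pstar.
Proof.
move=> QU Mpsd XE; have [MH _] := Mpsd; have [LH _] := Lpsd.
set D := Q^t* *m C0.
have DL : D *m L = M by rewrite -!mulmxA -BE XE mulmxA QU mul1mx.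
have MD : M *m D = L *m G.
  by rewrite -[M]MH -DL trmxC_mul LH -mulmxA gram_rotate_cos.
have XX : (P^t* *m B)^t* *m (P^t* *m B) = M *m M.
  by rewrite XE trmxC_mul MH -mulmxA (mulmxA (Q^t*)) QU mul1mx.
have EZ : (D - 1%:M) *m L + M *m (D - 1%:M) = - (L *m (1%:M - G)).
  rewrite mulmxBl mul1mx mulmxBr mulmx1 DL MD mulmxBr mulmx1.
  by rewrite opprB addrC addrA subrK.
apply: (le_trans _ frob_mul_compl_cos_le).
rewrite -[frob (L *m _)]frobN -EZ.
exact: sylvester_frob_lb (smin_ge0 _) (smin_ge0 _)
  (psd_sub_smin Lpsd gram_polar) (psd_sub_smin Mpsd XX).
Qed.

End PolarFactor.

Lemma sqrt_sqr_add_le (R : rcfType) (a b e nu tau : R) :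
  0 <= a -> 0 <= b -> 0 <= nu -> 0 < tau -> tau * a <= nu * b -> b <= e ->
  Num.sqrt (a ^+ 2 + b ^+ 2) <= (1 + 2 * nu / tau) * e.
Proof.
move=> a_ge0 b_ge0 nu_ge0 tau_gt0 ab be; have e_ge0 := le_trans b_ge0 be.
have y_ge0 : 0 <= nu / tau by rewrite divr_ge0 // ltW.
have a_le : a <= nu / tau * b by rewrite mulrAC ler_pdivlMr // mulrC.
have yb_le : nu / tau * b <= nu / tau * e by rewrite ler_wpM2l.
have ye_ge0 : 0 <= nu / tau * e by rewrite mulr_ge0.
apply: (@le_trans _ _ (a + b)).
  rewrite -(ger0_norm (addr_ge0 a_ge0 b_ge0)) -sqrtr_sqr ler_sqrt ?sqr_ge0 //.
  nra.
rewrite mulrDl mul1r -mulrA mulrDl mulrA; lra.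
Qed.

Theorem corollary4p4 (R : realType) (n k : nat)
    (B Pstar P : 'M[R[i]]_(n, k)) :
  (k <= n)%N ->
  \rank B = k ->
  polar_factor Pstar B ->
  P ^t* *m P = 1%:M ->
  let eta := trnorm B - trnorm (P ^t* *m B) in
  let eps := Num.sqrt (2 * eta / smin B) in
  [/\ frob (B - P *m (P ^t* *m B)) / norm2 B <= sinThetaF P Pstar,
      sinThetaF P Pstar <= eps &
      (\rank (P ^t* *m B) = k ->
       forall Q : 'M[R[i]]_k, polar_factor Q (P ^t* *m B) ->
       frob (P *m Q - Pstar)
         <= (1 + 2 * norm2 B / (smin B + smin (P ^t* *m B))) * eps)].
Proof.
case: k B Pstar P => [|k] B Pstar P _ rkB [PstarU [L [Lpsd BE]]] PU eta eps.
  rewrite /eps /frob /sinThetaF /smin /norm2 /mxtrace !big_ord0 /=.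
  rewrite sqrtr0 invr0 !mulr0 sqrtr0 mulr0.
  by split=> // _ Q _; rewrite big_ord0 /= sqrtr0.
have sig_gt0 := smin_gt0 (ltn0Sn k) rkB.
have gap := smin_sin_le_trnorm_gap PU PstarU Lpsd BE rkB.
have sin_le_eps : sinThetaF P Pstar <= eps.
  rewrite -[sinThetaF _ _]ger0_norm ?sqrtr_ge0 // -sqrtr_sqr ler_sqrt.
    by rewrite ler_pdivlMr // mulrC.
  apply: divr_ge0; last exact: ltW.
  by apply: le_trans gap; rewrite mulr_ge0 ?sqr_ge0 ?ltW.
split=> [||_ Q [QU [M [Mpsd XE]]]].
- exact: residual_ratio_le PU PstarU Lpsd BE.
- exact: sin_le_eps.
rewrite -[frob _]ger0_norm ?frob_ge0 // -sqrtr_sqr frob_rotation_sqr //.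
apply: sqrt_sqr_add_le sin_le_eps; rewrite ?frob_ge0 ?sqrtr_ge0 ?norm2_ge0 //.
  by rewrite ltr_wpDr ?smin_ge0.
exact (polar_rotation_le PU PstarU Lpsd BE QU Mpsd XE).
Qed.
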